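(* Let $K$ be a field, let $m,n,t$ be positive integers with $t\le m$, $t\le n$, let $X=(x_{ij})$ be an $m\times n$ matrix of indeterminates, and let $I_t\subseteq K[X]$ be the ideal generated by all $t\times t$ minors of $X$. Then $I_t$ contains no nonzero polynomial with at most $t!/2$ terms; equivalently, the shortness of $I_t$ is at least $t!/2+1$.
   Context: $K[X]$ denotes the polynomial ring over $K$ in the $mn$ indeterminates $x_{ij}$. The number of terms of a polynomial is the number of monomials appearing in it with nonzero coefficient. The shortness of an ideal $I$ is the minimal $s$ such that $I$ contains a nonzero polynomial with at most $s$ terms. *)

From HB Require Import structures.
From mathcomp Require Import all_boot all_order all_algebra.
From mathcomp Require Import multinomials.mpoly.
Set Implicit Arguments. Unset Strict Implicit. Unset Printing Implicit Defensive.
Import GRing.Theory.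
Local Open Scope ring_scope.

Definition genmx (K : fieldType) (m n : nat) : 'M[{mpoly K[m * n]}]_(m, n) :=
  \matrix_(i < m, j < n) 'X_(mxvec_index i j).

Definition incr (t k : nat) (f : {ffun 'I_t -> 'I_k}) : bool :=
  [forall i : 'I_t, forall j : 'I_t, (i < j)%N ==> (f i < f j)%N].

Definition minor (K : fieldType) (m n t : nat)
    (f : {ffun 'I_t -> 'I_m}) (g : {ffun 'I_t -> 'I_n}) : {mpoly K[m * n]} :=
  \det (\matrix_(i < t, j < t) genmx K m n (f i) (g j)).

Definition in_minor_ideal (K : fieldType) (m n : nat) (t : nat) (p : {mpoly K[m * n]}) : Prop :=
  exists a : {ffun 'I_t -> 'I_m} -> {ffun 'I_t -> 'I_n} -> {mpoly K[m * n]},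
    p = \sum_(f : {ffun 'I_t -> 'I_m} | incr f)
          \sum_(g : {ffun 'I_t -> 'I_n} | incr g) a f g * minor K f g.

Definition nterms (K : fieldType) (N : nat) (p : {mpoly K[N]}) : nat :=
  size (msupp p).
Arguments in_minor_ideal K m n t p : clear implicits.

From mathcomp Require Import all_boot all_order all_algebra.
From mathcomp Require Import multinomials.mpoly.
Set Implicit Arguments. Unset Strict Implicit. Unset Printing Implicit Defensive.
Import Order.TTheory GRing.Theory.

(* For phi : rows -> rows, let subst_rows phi be the ring endomorphism
   x_ij |-> x_(phi i) j; it never increases the number of terms, and it kills
   I_t when phi takes fewer than t values (two rows of every minor coincide).
   Choose phi with the fewest values such that g := subst_rows phi p != 0; its
   image A then has at least t rows, and folding any row b of A onto another
   row a of A kills g.  Hence every monomial u of g shares its image under the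
   folding with another monomial u' of g: the exponents of u' and u agree
   outside rows a, b and have the same sum on rows a, b.  A purely
   combinatorial counting argument (exchange_closed_size) shows that a
   nonempty set of monomials closed under such exchanges between any two of
   k rows has at least k! elements: the monomials maximising row a in the
   monomial order, for the various a, are pairwise disjoint families that are
   exchange closed for the remaining k - 1 rows. *)

Lemma sum_count_disjoint (I : finType) (T : eqType) (R : {set I})
    (P : I -> pred T) (s : seq T) :
  (forall x, x \in s -> #|[set a in R | P a x]| <= 1) ->
  \sum_(a in R) count (P a) s <= size s.
Proof.
move=> le1; rewrite -sum1_size.
have countE a : count (P a) s = \sum_(x <- s) P a x.
  by rewrite -sum1_count big_mkcond.
rewrite (eq_bigr _ (fun a _ => countE a)) exchange_big /= big_seq [X in _ <= X]big_seq.
apply: leq_sum => x xs; apply: leq_trans (le1 x xs).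
rewrite -sum1_card big_mkcond [X in _ <= X]big_mkcond /=.
by apply: leq_sum => a _; rewrite inE; case: (a \in R); case: (P a x).
Qed.

Lemma seq_argmax (T : eqType) d (O : orderType d) (F : T -> O) (s : seq T) :
  s != [::] -> exists2 x, x \in s & forall y, y \in s -> (F y <= F x)%O.
Proof.
elim: s => [//|x s IH] _.
have [->|/IH [z zs Fz]] := eqVneq s [::].
  by exists x; rewrite ?mem_head // => y; rewrite inE => /eqP ->.
have [Fxz|Fzx] := leP (F x) (F z).
  by exists z => [|y]; rewrite inE ?zs ?orbT // => /orP [/eqP ->|/Fz].
exists x => [|y]; first exact: mem_head.
by rewrite inE => /orP [/eqP ->//|/Fz Fy]; exact: le_trans Fy (ltW Fzx).
Qed.

(* Monomials are viewed through their "rows": row a e is the part of the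
   exponent e lying in row a, and e is determined by its rows. *)
Section ExchangeCounting.
Variables (I : finType) (T : eqType) (n : nat) (row : I -> T -> 'X_{1..n}).
Hypothesis row_inj : forall e e', (forall a, row a e = row a e') -> e = e'.

Definition exchange_closed (R : {set I}) (S : seq T) : Prop :=
  forall a b, a \in R -> b \in R -> a != b -> forall e, e \in S ->
  exists e', [/\ e' \in S, e' != e,
    (forall c, c != a -> c != b -> row c e' = row c e) &
    (row a e' + row b e' = row a e + row b e)%MM].

Definition maxrow (S : seq T) (a : I) : pred T :=
  fun e => all (fun y => row a y <= row a e)%O S.

Lemma maxrow_exists S a : S != [::] -> has (maxrow S a) S.
Proof. by case/(seq_argmax (row a)) => x xS Fx; apply/hasP; exists x => //; apply/allP. Qed.

(* Partners for rows other than a keep row a, hence stay maximal in row a. *)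
Lemma exchange_closed_maxrow R S a :
  exchange_closed R S -> exchange_closed (R :\ a) [seq e <- S | maxrow S a e].
Proof.
move=> ex c d; rewrite !in_setD1 => /andP [ca cR] /andP [da dR] cd e.
rewrite mem_filter => /andP [maxe eS].
have [e' [e'S e'e same sum]] := ex c d cR dR cd e eS.
by exists e'; split; rewrite // mem_filter e'S andbT /maxrow (same a) 1?eq_sym.
Qed.

(* An element maximal in two rows a != b would equal its (a, b)-partner:
   rows a, b cannot both decrease while keeping their sum. *)
Lemma maxrow_unique R S e : exchange_closed R S -> e \in S ->
  #|[set a in R | maxrow S a e]| <= 1.
Proof.
move=> ex eS; apply/card_le1_eqP => b a; rewrite !inE => /andP [bR maxb] /andP [aR maxa].
apply/eqP/negPn/negP => ab.
have [e' [e'S e'e same sum]] := ex a b aR bR ab e eS.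
have lea : (row a e' <= row a e)%O by exact: (allP maxa).
have leb : (row b e' <= row b e)%O by exact: (allP maxb).
have eqa : row a e' = row a e.
  apply/eqP; rewrite eq_le lea /= leNgt; apply/negP => lt.
  by have := ltmc_le_add lt leb; rewrite sum ltxx.
have eqb : row b e' = row b e.
  apply/eqP; rewrite eq_le leb /= leNgt; apply/negP => lt.
  by have := lemc_lt_add lea lt; rewrite sum ltxx.
move/eqP: e'e; apply; apply: row_inj => c.
have [->//|ca] := eqVneq c a; have [->//|cb] := eqVneq c b; exact: same.
Qed.

(* The counting lemma: by induction on #|R|, each of the #|R| disjoint
   families of row-a maximisers has at least (#|R| - 1)! elements. *)
Lemma exchange_closed_size R S : S != [::] -> exchange_closed R S -> #|R|`! <= size S.
Proof.
have [k cardR] : exists k, #|R| = k by exists #|R|.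
rewrite cardR; elim: k R S cardR => [|k IH] R S cardR nS ex.
  by rewrite fact0 lt0n size_eq0.
have le_max a : a \in R -> k`! <= count (maxrow S a) S.
  move=> aR; rewrite -size_filter; apply: (IH (R :\ a)).
  - by rewrite (cardsD1 a R) aR in cardR; case: cardR.
  - by rewrite -size_eq0 size_filter -lt0n -has_count maxrow_exists.
  - exact: exchange_closed_maxrow.
apply: leq_trans (sum_count_disjoint (fun e eS => maxrow_unique ex eS)).
by rewrite factS -cardR -sum_nat_const leq_sum.
Qed.

End ExchangeCounting.

Local Open Scope ring_scope.
Section RowSubstitution.
Variables (K : fieldType) (m n : nat).
Local Notation N := (m * n)%N.
Local Notation ix := (@mxvec_index m n).

Definition entry (k : 'I_N) : 'I_m * 'I_n :=
  enum_val (cast_ord (esym (mxvec_cast m n)) k).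

Lemma entryK i j : entry (ix i j) = (i, j).
Proof. by rewrite /entry /mxvec_index cast_ordK enum_rankK. Qed.

Lemma ix_eq i j i' j' : (ix i j == ix i' j') = (i == i') && (j == j').
Proof.
apply/eqP/andP => [E|[/eqP -> /eqP ->]//].
by have := entryK i j; rewrite E entryK => -[-> ->].
Qed.

Definition rowsub (phi : 'I_m -> 'I_m) (k : 'I_N) : 'I_N :=
  ix (phi (entry k).1) (entry k).2.

Lemma rowsubE phi i j : rowsub phi (ix i j) = ix (phi i) j.
Proof. by rewrite /rowsub entryK. Qed.

Lemma rowsub_ext phi1 phi2 : phi1 =1 phi2 -> rowsub phi1 =1 rowsub phi2.
Proof. by move=> E k; rewrite /rowsub E. Qed.

Definition subst_rows (phi : 'I_m -> 'I_m) (p : {mpoly K[N]}) : {mpoly K[N]} :=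
  p \mPo [tuple 'X_(rowsub phi k) | k < N].

Definition mexp_rows (phi : 'I_m -> 'I_m) (e : 'X_{1..N}) : 'X_{1..N} :=
  (\sum_(k < N) U_(rowsub phi k) *+ e k)%MM.

Lemma subst_rowsXU phi k : subst_rows phi 'X_k = 'X_(rowsub phi k).
Proof. by rewrite /subst_rows comp_mpolyXU -tnth_nth tnth_mktuple. Qed.

Lemma subst_rowsM phi : {morph subst_rows phi : x y / x * y}.
Proof. exact: rmorphM. Qed.

Lemma subst_rowsX phi e : subst_rows phi 'X_[e] = 'X_[mexp_rows phi e].
Proof.
rewrite /subst_rows comp_mpolyX /mexp_rows -mprodXnE.
by apply: eq_bigr => k _; rewrite tnth_mktuple.
Qed.

Lemma subst_rowsE phi p :
  subst_rows phi p = \sum_(e <- msupp p) p@_e *: 'X_[mexp_rows phi e].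
Proof. by rewrite {1}/subst_rows comp_mpolyEX; apply: eq_bigr => e _; rewrite -subst_rowsX. Qed.

Lemma subst_rows_coef phi p u :
  (subst_rows phi p)@_u = \sum_(e <- msupp p | mexp_rows phi e == u) p@_e.
Proof.
rewrite subst_rowsE raddf_sum [RHS]big_mkcond /=; apply: eq_bigr => e _.
rewrite mcoeffZ mcoeffX.
by case: (mexp_rows phi e == u); rewrite ?mulr1 ?mulr0.
Qed.

Lemma nterms_subst_rows phi p : (nterms (subst_rows phi p) <= nterms p)%N.
Proof.
rewrite /nterms -(size_map (mexp_rows phi) (msupp p)).
apply: uniq_leq_size; first exact: msupp_uniq.
move=> u; rewrite mcoeff_msupp subst_rows_coef; apply: contraR => nu.
by rewrite big_seq_cond big1 // => e /andP [eS /eqP eu]; case/negP: nu; rewrite -eu map_f.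
Qed.

Lemma subst_rows_eq0_partner phi g u : subst_rows phi g = 0 -> u \in msupp g ->
  exists2 u', u' \in msupp g & (u' != u) && (mexp_rows phi u' == mexp_rows phi u).
Proof.
move=> g0 uS; apply/hasP/negPn/negP => /hasPn alone.
have := subst_rows_coef phi g (mexp_rows phi u); rewrite g0 mcoeff0.
rewrite big_mkcond (bigD1_seq u) ?msupp_uniq //= big1_seq => [|u' /andP [ne u'S]].
  by rewrite eqxx addr0 => /esym/eqP; apply/negP; rewrite -mcoeff_msupp.
by have := alone u' u'S; rewrite ne /= => /negbTE ->.
Qed.

Lemma subst_rows_id p : subst_rows id p = p.
Proof.
rewrite -[RHS]comp_mpoly_id; congr (_ \mPo _).
apply: eq_from_tnth => k; rewrite !tnth_mktuple /rowsub.
by case/mxvec_indexP: k => i j; rewrite entryK.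
Qed.

Lemma subst_rows_ext phi1 phi2 p : phi1 =1 phi2 -> subst_rows phi1 p = subst_rows phi2 p.
Proof.
move=> E; congr (_ \mPo _).
by apply: eq_from_tnth => k; rewrite !tnth_mktuple (rowsub_ext E).
Qed.

Lemma subst_rows_comp phi1 phi2 p :
  subst_rows (phi2 \o phi1) p = subst_rows phi2 (subst_rows phi1 p).
Proof.
rewrite /subst_rows comp_mpolyEX [X in _ = _ X]comp_mpolyEX linear_sum /=.
apply: eq_bigr => e _; rewrite linearZ /= !comp_mpolyX rmorph_prod /=.
congr (_ *: _); apply: eq_bigr => k _; rewrite rmorphXn /= !tnth_mktuple.
rewrite -/(subst_rows phi2 _) subst_rowsXU.
by case/mxvec_indexP: k => i j; rewrite !rowsubE.
Qed.

Lemma subst_rows_minor phi t (f : {ffun 'I_t -> 'I_m}) (g : {ffun 'I_t -> 'I_n})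
    (i1 i2 : 'I_t) :
  i1 != i2 -> phi (f i1) = phi (f i2) -> subst_rows phi (minor K f g) = 0.
Proof.
move=> ne E; rewrite /minor /subst_rows -det_map_mx.
apply: (determinant_alternate ne) => j; rewrite !mxE.
change (subst_rows phi 'X_(ix (f i1) (g j)) = subst_rows phi 'X_(ix (f i2) (g j))).
by rewrite !subst_rowsXU !rowsubE E.
Qed.

Lemma subst_rows_ideal phi t p : in_minor_ideal K m n t p ->
  (#|[set phi i | i in 'I_m]| < t)%N -> subst_rows phi p = 0.
Proof.
case=> a -> small; rewrite /subst_rows raddf_sum big1 // => f _.
rewrite raddf_sum big1 // => g _.
change (subst_rows phi (a f g * minor K f g) = 0); rewrite subst_rowsM.
have [/injectiveP inj|/injectivePn [i1 [i2 ne E]]] := boolP (injectiveb (phi \o f)).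
  suff : (t <= #|[set phi i | i in 'I_m]|)%N by rewrite leqNgt small.
  rewrite -[t]card_ord -(card_imset _ inj); apply: subset_leq_card.
  by apply/subsetP => y /imsetP [i _ ->]; exact: imset_f.
by rewrite (subst_rows_minor g ne E) mulr0.
Qed.

Definition merge (a b r : 'I_m) : 'I_m := if r == b then a else r.

Definition rowexp (r : 'I_m) (e : 'X_{1..N}) : 'X_{1..n} := [multinom e (ix r j) | j < n].

Lemma rowexp_inj e e' : (forall r, rowexp r e = rowexp r e') -> e = e'.
Proof.
move=> E; apply/mnmP => k; case/mxvec_indexP: k => i j.
by move/mnmP: (E i) => /(_ j); rewrite !mnmE.
Qed.

Lemma mexp_rowsE phi e k0 : mexp_rows phi e k0 = (\sum_(k < N | rowsub phi k == k0) e k)%N.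
Proof.
rewrite /mexp_rows mnm_sumE [RHS]big_mkcond; apply: eq_bigr => k _.
by rewrite mulmnE mnm1E; case: (rowsub phi k == k0); rewrite ?mul1n ?mul0n.
Qed.

Lemma rowexp_merge_other a b e r : r != a -> r != b ->
  rowexp r (mexp_rows (merge a b) e) = rowexp r e.
Proof.
move=> ra rb; apply/mnmP => j; rewrite !mnmE mexp_rowsE.
rewrite (eq_bigl (pred1 (ix r j))) ?big_pred1_eq // => k.
case/mxvec_indexP: k => i' j'; rewrite rowsubE /merge /=.
have [->|ib] := eqVneq i' b; rewrite !ix_eq //.
by rewrite ![_ == r]eq_sym (negbTE ra) (negbTE rb).
Qed.

Lemma rowexp_merge a b e : a != b ->
  rowexp a (mexp_rows (merge a b) e) = (rowexp a e + rowexp b e)%MM.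
Proof.
move=> ab; apply/mnmP => j; rewrite mnmDE !mnmE mexp_rowsE.
rewrite (bigD1 (ix a j)) /=; last by rewrite rowsubE /merge (negbTE ab).
congr (_ + _)%N; rewrite (eq_bigl (pred1 (ix b j))) ?big_pred1_eq // => k.
case/mxvec_indexP: k => i' j'; rewrite rowsubE /merge /=.
have [->|ib] := eqVneq i' b; rewrite !ix_eq ?andbN ?(negbTE ib) //.
by rewrite !eqxx [b == a]eq_sym (negbTE ab) andbT.
Qed.
End RowSubstitution.

Lemma merge_exchange_closed (K : fieldType) (m n : nat) (A : {set 'I_m})
    (g : {mpoly K[m * n]}) :
  (forall a b, a \in A -> b \in A -> a != b -> subst_rows (merge a b) g = 0) ->
  exchange_closed (@rowexp m n) A (msupp g).
Proof.
move=> merge0 a b aA bA ab u uS.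
have [u' u'S /andP [u'u /eqP same]] := subst_rows_eq0_partner (merge0 a b aA bA ab) uS.
exists u'; split=> // [c ca cb|].
  by rewrite -(rowexp_merge_other u' ca cb) same rowexp_merge_other.
by rewrite -!rowexp_merge // same.
Qed.

(* Among the row substitutions not killing p, take one with the fewest rows in
   its image A.  Then A has at least t rows, and merging two rows of A kills
   the substituted polynomial. *)
Lemma minimal_row_substitution (K : fieldType) (m n t : nat) (p : {mpoly K[m * n]}) :
  in_minor_ideal K m n t p -> p != 0 ->
  exists phi : 'I_m -> 'I_m, let A := [set phi i | i in 'I_m] in
    [/\ subst_rows phi p != 0, (t <= #|A|)%N &
      forall a b, a \in A -> b \in A -> a != b ->
        subst_rows (merge a b) (subst_rows phi p) = 0].
Proof.
move=> Ip p0.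
pose nonzero_with k := [exists phi : {ffun 'I_m -> 'I_m},
  (#|[set phi i | i in 'I_m]| == k) && (subst_rows phi p != 0)].
have nonzero_id : nonzero_with #|[set: 'I_m]|.
  apply/existsP; exists [ffun i => i].
  rewrite (subst_rows_ext _ (phi2 := id)) => [|i]; last by rewrite ffunE.
  rewrite subst_rows_id p0 andbT; apply/eqP; congr #|pred_of_set _|.
  by apply/setP => i; rewrite in_setT; apply/imsetP; exists i; rewrite ?ffunE.
case: (ex_minnP (ex_intro nonzero_with _ nonzero_id)).
move=> k /existsP [phi /andP [/eqP cardA nz]] minimal.
exists phi; split => // [|a b aA bA ab].
  rewrite leqNgt cardA; apply: contraNN nz => small.
  by rewrite (subst_rows_ideal Ip) ?cardA.
pose phi' := [ffun i => merge a b (phi i)].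
have smaller : (#|[set phi' i | i in 'I_m]| < k)%N.
  rewrite -cardA (cardsD1 b [set phi i | i in 'I_m]) bA add1n ltnS.
  apply: subset_leq_card; apply/subsetP => y /imsetP [i _ ->]; rewrite ffunE /merge in_setD1.
  by case: ifP => [_|ne]; rewrite ?ab ?aA // ne imset_f.
rewrite -subst_rows_comp -(subst_rows_ext _ (phi1 := phi')) => [|i]; last by rewrite ffunE.
apply/eqP; apply: contraTT smaller => nz'; rewrite -leqNgt; apply: minimal.
by apply/existsP; exists phi'; rewrite eqxx nz'.
Qed.

Lemma fact_le_nterms (K : fieldType) (m n t : nat) (p : {mpoly K[m * n]}) :
  in_minor_ideal K m n t p -> p != 0 -> (t`! <= nterms p)%N.
Proof.
move=> Ip p0; have [phi [nz tA merge0]] := minimal_row_substitution Ip p0.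
apply: leq_trans (leq_fact tA) (leq_trans _ (nterms_subst_rows phi p)).
apply: (exchange_closed_size (@rowexp_inj m n)); first by rewrite msupp_eq0.
exact: merge_exchange_closed.
Qed.

(* Theorem 3.1: I_t contains no nonzero polynomial with at most t!/2 terms
   (the bound of fact_le_nterms needs none of the hypotheses on t). *)
Theorem theorem3p1 (K : fieldType) (m n t : nat)
    (ht : (0 < t)%N) (hm : (t <= m)%N) (hn : (t <= n)%N)
    (p : {mpoly K[m * n]}) :
  in_minor_ideal K m n t p -> p != 0 -> (t`! < 2 * nterms p)%N.
Proof.
move=> Ip p0; apply: leq_ltn_trans (fact_le_nterms Ip p0) _.
have nterms_gt0 : (0 < nterms p)%N by rewrite lt0n size_eq0 msupp_eq0.
by rewrite mul2n -addnn -[X in (X < _)%N]addn0 ltn_add2l.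
Qed.
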